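(* Every $\mathbb{B}$-sober bitopological space is d-sober, and hence join sober (i.e. the topological space $(X,\tau[tt]\vee\tau[ff])$ is sober).
   Context: $\mathbb{B}=\{0,1,tt,ff\}$ is the four-element Boolean algebra with bottom $0$, top $1$, and $tt,ff$ incomparable complements. A bitopological space $(X,\tau[tt],\tau[ff])$ is identified with the $\mathbb{B}$-topology $\tau=\{\lambda\colon X\to\mathbb{B}: \lambda[tt]\in\tau[tt],\ \lambda[ff]\in\tau[ff]\}$, where $\lambda[b]=\{x:\lambda(x)\ge b\}$; $b_X$ is the constant map with value $b$. A $\mathbb{B}$-point of $\tau$ is a frame homomorphism $p\colon\tau\to\mathbb{B}$ with $p(b_X)=b$ for all $b$; the space is $\mathbb{B}$-sober if for every $\mathbb{B}$-point $p$ there is a unique $x$ with $p(\lambda)=\lambda(x)$ for all $\lambda\in\tau$. A d-point of $(X,\tau[tt],\tau[ff])$ is a pair of frame homomorphisms $p_{tt}\colon\tau[tt]\to\{0,1\}$, $p_{ff}\colon\tau[ff]\to\{0,1\}$ such that: if $U\in\tau[tt]$, $V\in\tau[ff]$ and $U\cap V=\emptyset$ then $p_{tt}(U)=0$ or $p_{ff}(V)=0$; and if $U\cup V=X$ then $p_{tt}(U)=1$ or $p_{ff}(V)=1$. Each $x\in X$ gives the d-point $[x]$ with $[x]_{tt}(U)=1\iff x\in U$, $[x]_{ff}(V)=1\iff x\in V$. The space is d-sober if every d-point equals $[x]$ for a unique $x$. A topological space is sober if every irreducible closed set is the closure of a unique point. *)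

From Stdlib Require Import Bool.

Definition is_topology {X : Type} (T : (X -> Prop) -> Prop) : Prop :=
  T (fun _ => True) /\
  (forall U V, T U -> T V -> T (fun x => U x /\ V x)) /\
  (forall (I : Type) (F : I -> X -> Prop),
      (forall i, T (F i)) -> T (fun x => exists i, F i x)).

Inductive B : Type := B0 | B1 | Btt | Bff.

Definition Ble (a b : B) : Prop := a = B0 \/ b = B1 \/ a = b.

Definition is_lub_B {I : Type} (f : I -> B) (b : B) : Prop :=
  (forall i, Ble (f i) b) /\ (forall c, (forall i, Ble (f i) c) -> Ble b c).

Definition is_glb2_B (a b c : B) : Prop :=
  Ble c a /\ Ble c b /\ (forall d, Ble d a -> Ble d b -> Ble d c).

Definition cut {X : Type} (l : X -> B) (b : B) : X -> Prop := fun x => Ble b (l x).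

(** The B-topology tau associated with the bitopological space (X, Ttt, Tff). *)
Definition Btop {X : Type} (Ttt Tff : (X -> Prop) -> Prop) (l : X -> B) : Prop :=
  Ttt (cut l Btt) /\ Tff (cut l Bff).

Definition Fle {X : Type} (l m : X -> B) : Prop := forall x, Ble (l x) (m x).

Definition is_lub_tau {X : Type} (Ttt Tff : (X -> Prop) -> Prop)
  {I : Type} (F : I -> X -> B) (l : X -> B) : Prop :=
  Btop Ttt Tff l /\ (forall i, Fle (F i) l) /\
  (forall m, Btop Ttt Tff m -> (forall i, Fle (F i) m) -> Fle l m).

Definition is_glb2_tau {X : Type} (Ttt Tff : (X -> Prop) -> Prop)
  (l m n : X -> B) : Prop :=
  Btop Ttt Tff n /\ Fle n l /\ Fle n m /\
  (forall k, Btop Ttt Tff k -> Fle k l -> Fle k m -> Fle k n).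

Definition frame_hom_B {X : Type} (Ttt Tff : (X -> Prop) -> Prop)
  (p : (X -> B) -> B) : Prop :=
  p (fun _ => B1) = B1 /\
  (forall l m n, Btop Ttt Tff l -> Btop Ttt Tff m -> is_glb2_tau Ttt Tff l m n ->
     is_glb2_B (p l) (p m) (p n)) /\
  (forall (I : Type) (F : I -> X -> B) (l : X -> B),
     (forall i, Btop Ttt Tff (F i)) -> is_lub_tau Ttt Tff F l ->
     is_lub_B (fun i => p (F i)) (p l)).

Definition B_point {X : Type} (Ttt Tff : (X -> Prop) -> Prop)
  (p : (X -> B) -> B) : Prop :=
  frame_hom_B Ttt Tff p /\ (forall b, p (fun _ => b) = b).

Definition B_sober {X : Type} (Ttt Tff : (X -> Prop) -> Prop) : Prop :=
  forall p, B_point Ttt Tff p ->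
    exists! x : X, forall l, Btop Ttt Tff l -> p l = l x.

Definition frame_hom_2 {X : Type} (T : (X -> Prop) -> Prop)
  (q : (X -> Prop) -> bool) : Prop :=
  q (fun _ => True) = true /\
  (forall U V, T U -> T V -> q (fun x => U x /\ V x) = q U && q V) /\
  (forall (I : Type) (F : I -> X -> Prop), (forall i, T (F i)) ->
     (q (fun x => exists i, F i x) = true <-> exists i, q (F i) = true)).

Definition d_point {X : Type} (Ttt Tff : (X -> Prop) -> Prop)
  (ptt pff : (X -> Prop) -> bool) : Prop :=
  frame_hom_2 Ttt ptt /\ frame_hom_2 Tff pff /\
  (forall U V, Ttt U -> Tff V -> (forall x, ~ (U x /\ V x)) ->
     ptt U = false \/ pff V = false) /\
  (forall U V, Ttt U -> Tff V -> (forall x, U x \/ V x) ->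
     ptt U = true \/ pff V = true).

Definition d_point_at {X : Type} (Ttt Tff : (X -> Prop) -> Prop)
  (ptt pff : (X -> Prop) -> bool) (x : X) : Prop :=
  (forall U, Ttt U -> (ptt U = true <-> U x)) /\
  (forall V, Tff V -> (pff V = true <-> V x)).

Definition d_sober {X : Type} (Ttt Tff : (X -> Prop) -> Prop) : Prop :=
  forall ptt pff, d_point Ttt Tff ptt pff ->
    exists! x : X, d_point_at Ttt Tff ptt pff x.

Definition join_top {X : Type} (T1 T2 : (X -> Prop) -> Prop) : (X -> Prop) -> Prop :=
  fun U => forall T, is_topology T -> (forall V, T1 V -> T V) ->
                     (forall V, T2 V -> T V) -> T U.

Definition closed_in {X : Type} (T : (X -> Prop) -> Prop) (C : X -> Prop) : Prop :=
  T (fun x => ~ C x).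

Definition irreducible_closed {X : Type} (T : (X -> Prop) -> Prop) (C : X -> Prop) : Prop :=
  closed_in T C /\ (exists x, C x) /\
  (forall C1 C2, closed_in T C1 -> closed_in T C2 ->
     (forall x, C x -> C1 x \/ C2 x) ->
     (forall x, C x -> C1 x) \/ (forall x, C x -> C2 x)).

Definition point_closure {X : Type} (T : (X -> Prop) -> Prop) (x : X) : X -> Prop :=
  fun y => forall D, closed_in T D -> D x -> D y.

Definition sober {X : Type} (T : (X -> Prop) -> Prop) : Prop :=
  forall C, irreducible_closed T C ->
    exists! x : X, forall y, C y <-> point_closure T x y.

(* A pair of frame homomorphisms ptt : tau[tt] -> 2, pff : tau[ff] -> 2 assembles into the
   B-point lambda |-> (ptt lambda[tt], pff lambda[ff]), because finite meets and joins in tau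
   are computed cutwise; the point realising it by B-sobriety realises (ptt, pff).
   For join sobriety, an irreducible closed set C of the join topology gives the d-point
   U |-> [U meets C] in both components. Its realising point x satisfies
   "W meets C <-> x \in W" for the opens of both topologies, and these W form a topology,
   so the equivalence holds for every join-open W; this says exactly that C is the closure
   of x, and x is unique because it realises the d-point. *)
From Stdlib Require Import Bool Classical ClassicalEpsilon FunctionalExtensionality PropExtensionality.

Lemma set_ext {X : Type} (U V : X -> Prop) : (forall x, U x <-> V x) -> U = V.
Proof.
  intros H; apply functional_extensionality; intro x; apply propositional_extensionality; auto.
Qed.

Definition bool_of (P : Prop) : bool := if excluded_middle_informative P then true else false.

Lemma bool_ofE (P : Prop) : bool_of P = true <-> P.
Proof. unfold bool_of; destruct (excluded_middle_informative P); split; intuition discriminate. Qed.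

Lemma bool_eq_iff (a b : bool) : (a = true <-> b = true) -> a = b.
Proof. destruct a, b; intuition. Qed.

Definition B_of_bools (t f : bool) : B :=
  match t, f with
  | true, true => B1 | true, false => Btt | false, true => Bff | false, false => B0
  end.

Lemma Ble_tt_B_of_bools t f : Ble Btt (B_of_bools t f) <-> t = true.
Proof. destruct t, f; unfold Ble; simpl; intuition discriminate. Qed.

Lemma Ble_ff_B_of_bools t f : Ble Bff (B_of_bools t f) <-> f = true.
Proof. destruct t, f; unfold Ble; simpl; intuition discriminate. Qed.

Lemma Ble_by_components a b :
  Ble a b <-> (Ble Btt a -> Ble Btt b) /\ (Ble Bff a -> Ble Bff b).
Proof. destruct a, b; unfold Ble; intuition discriminate. Qed.

Lemma B_eq_by_components a b :
  (Ble Btt a <-> Ble Btt b) -> (Ble Bff a <-> Ble Bff b) -> a = b.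
Proof.
  intros Htt Hff; assert (Hab : Ble a b) by (apply Ble_by_components; tauto).
  assert (Hba : Ble b a) by (apply Ble_by_components; tauto).
  destruct a, b; try reflexivity;
    destruct Hab as [?|[?|?]], Hba as [?|[?|?]]; discriminate.
Qed.

Lemma is_lub_B_by_components {I : Type} (g : I -> B) b :
  (Ble Btt b <-> exists i, Ble Btt (g i)) ->
  (Ble Bff b <-> exists i, Ble Bff (g i)) -> is_lub_B g b.
Proof.
  intros Htt Hff; split.
  - intro i; apply Ble_by_components; split; intro h; [apply Htt | apply Hff]; eauto.
  - intros c Hc; apply Ble_by_components; split.
    + intros [i h]%Htt; exact (proj1 (proj1 (Ble_by_components _ _) (Hc i)) h).
    + intros [i h]%Hff; exact (proj2 (proj1 (Ble_by_components _ _) (Hc i)) h).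
Qed.

Lemma is_glb2_B_by_components a b c :
  (Ble Btt c <-> Ble Btt a /\ Ble Btt b) ->
  (Ble Bff c <-> Ble Bff a /\ Ble Bff b) -> is_glb2_B a b c.
Proof.
  intros Htt Hff; split; [|split].
  - apply Ble_by_components; split; intro h; [apply Htt | apply Hff]; auto.
  - apply Ble_by_components; split; intro h; [apply Htt | apply Hff]; auto.
  - intros d Hda Hdb; apply Ble_by_components.
    rewrite Ble_by_components in Hda, Hdb; split; intro h; [apply Htt | apply Hff]; tauto.
Qed.

Definition B_indicator {X : Type} (U V : X -> Prop) : X -> B :=
  fun x => B_of_bools (bool_of (U x)) (bool_of (V x)).

Lemma cut_B_indicator_tt {X : Type} (U V : X -> Prop) : cut (B_indicator U V) Btt = U.
Proof. apply set_ext; intro x; unfold cut, B_indicator; rewrite Ble_tt_B_of_bools; apply bool_ofE. Qed.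

Lemma cut_B_indicator_ff {X : Type} (U V : X -> Prop) : cut (B_indicator U V) Bff = V.
Proof. apply set_ext; intro x; unfold cut, B_indicator; rewrite Ble_ff_B_of_bools; apply bool_ofE. Qed.

Lemma Fle_by_cuts {X : Type} (k l : X -> B) :
  Fle k l <-> (forall x, cut k Btt x -> cut l Btt x) /\ (forall x, cut k Bff x -> cut l Bff x).
Proof.
  unfold Fle, cut; split.
  - intro H; split; intro x; apply (Ble_by_components _ _), H.
  - intros [Htt Hff] x; apply Ble_by_components; auto.
Qed.

Lemma cut_const {X : Type} (a b : B) : cut (fun _ : X => b) a = fun _ => Ble a b.
Proof. reflexivity. Qed.

Lemma is_topology_empty {X : Type} (T : (X -> Prop) -> Prop) (E : X -> Prop) :
  is_topology T -> (forall x, ~ E x) -> T E.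
Proof.
  intros [_ [_ Hjoin]] HE.
  replace E with (fun x => exists i : False, (fun _ : X => True) x).
  - apply (Hjoin False (fun _ _ => True)); intros [].
  - apply set_ext; intro x; split; [intros [[] _] | intro h; destruct (HE x h)].
Qed.

Lemma frame_hom_2_empty {X : Type} (T : (X -> Prop) -> Prop) q (E : X -> Prop) :
  frame_hom_2 T q -> (forall x, ~ E x) -> q E = false.
Proof.
  intros [_ [_ Hjoin]] HE.
  replace E with (fun x => exists i : False, (fun _ : X => True) x).
  - destruct (q _) eqn:e; [|reflexivity].
    destruct (proj1 (Hjoin False (fun _ _ => True) (fun i => match i with end)) e) as [[] _].
  - apply set_ext; intro x; split; [intros [[] _] | intro h; destruct (HE x h)].
Qed.

Lemma frame_hom_2_full {X : Type} (T : (X -> Prop) -> Prop) q (E : X -> Prop) :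
  frame_hom_2 T q -> (forall x, E x) -> q E = true.
Proof. intros [Htop _] HE; replace E with (fun _ : X => True); [exact Htop | apply set_ext; intuition]. Qed.

Section BSober.

Variables (X : Type) (Ttt Tff : (X -> Prop) -> Prop).
Hypotheses (Htt : is_topology Ttt) (Hff : is_topology Tff).

Lemma Btop_B_indicator U V : Ttt U -> Tff V -> Btop Ttt Tff (B_indicator U V).
Proof. intros HU HV; split; [rewrite cut_B_indicator_tt | rewrite cut_B_indicator_ff]; auto. Qed.

Lemma is_glb2_tau_cuts l m n :
  Btop Ttt Tff l -> Btop Ttt Tff m -> is_glb2_tau Ttt Tff l m n ->
  cut n Btt = (fun x => cut l Btt x /\ cut m Btt x) /\
  cut n Bff = (fun x => cut l Bff x /\ cut m Bff x).
Proof.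
  intros [l1 l2] [m1 m2] [_ [Hnl [Hnm Hglb]]].
  set (k := B_indicator (fun x => cut l Btt x /\ cut m Btt x)
                        (fun x => cut l Bff x /\ cut m Bff x)).
  assert (Hkn : Fle k n).
  { apply Hglb.
    - apply Btop_B_indicator; [apply Htt | apply Hff]; auto.
    - apply Fle_by_cuts; unfold k; rewrite cut_B_indicator_tt, cut_B_indicator_ff.
      split; intros x [h _]; exact h.
    - apply Fle_by_cuts; unfold k; rewrite cut_B_indicator_tt, cut_B_indicator_ff.
      split; intros x [_ h]; exact h. }
  apply Fle_by_cuts in Hkn, Hnl, Hnm.
  unfold k in Hkn; rewrite cut_B_indicator_tt, cut_B_indicator_ff in Hkn.
  destruct Hkn, Hnl, Hnm.
  split; apply set_ext; intro x; split; auto.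
Qed.

Lemma is_lub_tau_cuts {I : Type} (F : I -> X -> B) l :
  (forall i, Btop Ttt Tff (F i)) -> is_lub_tau Ttt Tff F l ->
  cut l Btt = (fun x => exists i, cut (F i) Btt x) /\
  cut l Bff = (fun x => exists i, cut (F i) Bff x).
Proof.
  intros HF [_ [HFl Hlub]].
  set (k := B_indicator (fun x => exists i, cut (F i) Btt x)
                        (fun x => exists i, cut (F i) Bff x)).
  assert (Hlk : Fle l k).
  { apply Hlub.
    - apply Btop_B_indicator; [apply Htt | apply Hff]; intro i; apply HF.
    - intro i; apply Fle_by_cuts; unfold k; rewrite cut_B_indicator_tt, cut_B_indicator_ff.
      split; intros x h; exists i; exact h. }
  apply Fle_by_cuts in Hlk; unfold k in Hlk; rewrite cut_B_indicator_tt, cut_B_indicator_ff in Hlk.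
  destruct Hlk as [Hlk_tt Hlk_ff].
  assert (HFcuts := fun i => proj1 (Fle_by_cuts _ _) (HFl i)).
  split; apply set_ext; intro x; split; auto; intros [i h].
  - exact (proj1 (HFcuts i) x h).
  - exact (proj2 (HFcuts i) x h).
Qed.

Definition B_point_of_pair (ptt pff : (X -> Prop) -> bool) (l : X -> B) : B :=
  B_of_bools (ptt (cut l Btt)) (pff (cut l Bff)).

Lemma B_point_of_pair_spec ptt pff :
  frame_hom_2 Ttt ptt -> frame_hom_2 Tff pff -> B_point Ttt Tff (B_point_of_pair ptt pff).
Proof.
  intros Hptt Hpff; unfold B_point_of_pair.
  assert (Hconst : forall b, B_of_bools (ptt (cut (fun _ => b) Btt)) (pff (cut (fun _ => b) Bff)) = b).
  { intro b; rewrite !cut_const; destruct b;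
      repeat first
        [ rewrite (frame_hom_2_full _ _ _ Hptt) by (unfold Ble; auto)
        | rewrite (frame_hom_2_full _ _ _ Hpff) by (unfold Ble; auto)
        | rewrite (frame_hom_2_empty _ _ _ Hptt) by (unfold Ble; intuition discriminate)
        | rewrite (frame_hom_2_empty _ _ _ Hpff) by (unfold Ble; intuition discriminate) ];
      reflexivity. }
  split; [split; [|split] | exact Hconst].
  - exact (Hconst B1).
  - intros l m n Hl Hm Hn.
    destruct (is_glb2_tau_cuts l m n Hl Hm Hn) as [-> ->].
    destruct Hl as [l1 l2], Hm as [m1 m2].
    apply is_glb2_B_by_components.
    + rewrite !Ble_tt_B_of_bools, (proj1 (proj2 Hptt) _ _ l1 m1); apply andb_true_iff.
    + rewrite !Ble_ff_B_of_bools, (proj1 (proj2 Hpff) _ _ l2 m2); apply andb_true_iff.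
  - intros I F l HF Hl.
    destruct (is_lub_tau_cuts F l HF Hl) as [-> ->].
    apply is_lub_B_by_components.
    + setoid_rewrite Ble_tt_B_of_bools; apply (proj2 (proj2 Hptt)); intro i; apply HF.
    + setoid_rewrite Ble_ff_B_of_bools; apply (proj2 (proj2 Hpff)); intro i; apply HF.
Qed.

Lemma B_point_of_pair_at ptt pff x :
  d_point_at Ttt Tff ptt pff x ->
  forall l, Btop Ttt Tff l -> B_point_of_pair ptt pff l = l x.
Proof.
  intros [Hptt Hpff] l [l1 l2]; unfold B_point_of_pair; apply B_eq_by_components.
  - rewrite Ble_tt_B_of_bools; exact (Hptt _ l1).
  - rewrite Ble_ff_B_of_bools; exact (Hpff _ l2).
Qed.

Lemma d_point_at_of_B_point_of_pair ptt pff x :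
  (forall l, Btop Ttt Tff l -> B_point_of_pair ptt pff l = l x) ->
  d_point_at Ttt Tff ptt pff x.
Proof.
  intros Hx; split; intros U HU.
  - set (l := B_indicator U (fun _ => False)).
    assert (Hl : Btop Ttt Tff l)
      by exact (Btop_B_indicator _ _ HU (is_topology_empty _ _ Hff (fun _ h => h))).
    transitivity (Ble Btt (B_point_of_pair ptt pff l)).
    + unfold B_point_of_pair, l; rewrite Ble_tt_B_of_bools, cut_B_indicator_tt; reflexivity.
    + rewrite (Hx l Hl); change (cut l Btt x <-> U x); unfold l; rewrite cut_B_indicator_tt; reflexivity.
  - set (l := B_indicator (fun _ => False) U).
    assert (Hl : Btop Ttt Tff l)
      by exact (Btop_B_indicator _ _ (is_topology_empty _ _ Htt (fun _ h => h)) HU).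
    transitivity (Ble Bff (B_point_of_pair ptt pff l)).
    + unfold B_point_of_pair, l; rewrite Ble_ff_B_of_bools, cut_B_indicator_ff; reflexivity.
    + rewrite (Hx l Hl); change (cut l Bff x <-> U x); unfold l; rewrite cut_B_indicator_ff; reflexivity.
Qed.

Lemma d_sober_of_B_sober : B_sober Ttt Tff -> d_sober Ttt Tff.
Proof.
  intros HB ptt pff [Hptt [Hpff _]].
  destruct (HB _ (B_point_of_pair_spec _ _ Hptt Hpff)) as [x [Hx Huniq]].
  exists x; split.
  - exact (d_point_at_of_B_point_of_pair _ _ _ Hx).
  - intros y Hy; exact (Huniq y (B_point_of_pair_at _ _ _ Hy)).
Qed.

End BSober.

Definition meets {X : Type} (U C : X -> Prop) : Prop := exists y, U y /\ C y.

Lemma closed_in_compl_open {X : Type} (T : (X -> Prop) -> Prop) U :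
  T U -> closed_in T (fun x => ~ U x).
Proof.
  intro HU; unfold closed_in; replace (fun x => ~ ~ U x) with U; [exact HU|].
  apply set_ext; intro x; split; [tauto | apply NNPP].
Qed.

Lemma irreducible_meets_inter {X : Type} (T : (X -> Prop) -> Prop) C U V :
  irreducible_closed T C -> T U -> T V -> meets U C -> meets V C ->
  meets (fun x => U x /\ V x) C.
Proof.
  intros [_ [_ Hirr]] HU HV [y [Uy Cy]] [z [Vz Cz]].
  apply NNPP; intro Hdisj.
  destruct (Hirr _ _ (closed_in_compl_open T U HU) (closed_in_compl_open T V HV)) as [h|h].
  - intros x Cx; apply not_and_or; intro; apply Hdisj; exists x; tauto.
  - exact (h y Cy Uy).
  - exact (h z Cz Vz).
Qed.

Lemma frame_hom_2_meets {X : Type} (T S : (X -> Prop) -> Prop) C :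
  irreducible_closed T C -> (forall U, S U -> T U) ->
  frame_hom_2 S (fun U => bool_of (meets U C)).
Proof.
  intros HC HST; split; [|split].
  - apply bool_ofE; destruct HC as [_ [[y Cy] _]]; exists y; auto.
  - intros U V HU HV; apply bool_eq_iff; rewrite andb_true_iff, !bool_ofE; split.
    + intros [y [[Uy Vy] Cy]]; split; exists y; auto.
    + intros [HUC HVC]; apply (irreducible_meets_inter T); auto.
  - intros I F HF; rewrite bool_ofE; setoid_rewrite bool_ofE; split.
    + intros [y [[i Fy] Cy]]; exists i, y; auto.
    + intros [i [y [Fy Cy]]]; exists y; split; [exists i|]; auto.
Qed.

Lemma point_closure_of_meets_iff {X : Type} (T : (X -> Prop) -> Prop) C x :
  closed_in T C -> (forall W, T W -> (meets W C <-> W x)) ->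
  forall y, C y <-> point_closure T x y.
Proof.
  intros HC Hmeets y; split.
  - intros Cy D HD Dx; apply NNPP; intro nDy.
    exact (proj1 (Hmeets _ HD) (ex_intro _ y (conj nDy Cy)) Dx).
  - intro Hy; apply Hy; [exact HC|]; apply NNPP; intro nCx.
    destruct (proj2 (Hmeets _ HC) nCx) as [z [nCz Cz]]; contradiction.
Qed.

Lemma meets_iff_of_point_closure {X : Type} (T : (X -> Prop) -> Prop) C x :
  (forall y, C y <-> point_closure T x y) ->
  forall W, T W -> (meets W C <-> W x).
Proof.
  intros HC W HW; split.
  - intros [y [Wy Cy]]; apply NNPP; intro nWx.
    exact (proj1 (HC y) Cy _ (closed_in_compl_open T W HW) nWx Wy).
  - intro Wx; exists x; split; [exact Wx|]; apply HC; intros D _ Dx; exact Dx.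
Qed.

Section JoinSober.

Variables (X : Type) (Ttt Tff : (X -> Prop) -> Prop).

Lemma is_topology_join_top : is_topology (join_top Ttt Tff).
Proof.
  split; [|split].
  - intros T HT _ _; apply HT.
  - intros U V HU HV T HT Htt Hff; apply HT; [apply HU | apply HV]; auto.
  - intros I F HF T HT Htt Hff; apply HT; intro i; apply HF; auto.
Qed.

Lemma join_top_tt U : Ttt U -> join_top Ttt Tff U.
Proof. intros HU T _ Htt _; auto. Qed.

Lemma join_top_ff U : Tff U -> join_top Ttt Tff U.
Proof. intros HU T _ _ Hff; auto. Qed.

Lemma d_point_meets C :
  irreducible_closed (join_top Ttt Tff) C ->
  d_point Ttt Tff (fun U => bool_of (meets U C)) (fun U => bool_of (meets U C)).
Proof.
  intros HC; split; [|split; [|split]].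
  - exact (frame_hom_2_meets _ _ C HC join_top_tt).
  - exact (frame_hom_2_meets _ _ C HC join_top_ff).
  - intros U V HU HV Hdisj.
    destruct (classic (meets U C)) as [HUC|HUC]; [right | left];
      apply not_true_is_false; rewrite bool_ofE; intro HVC; [|contradiction].
    destruct (irreducible_meets_inter _ _ U V HC (join_top_tt U HU) (join_top_ff V HV) HUC HVC)
      as [y [Hy _]].
    exact (Hdisj y Hy).
  - intros U V HU HV Hcover; destruct HC as [_ [[y Cy] _]].
    destruct (Hcover y); [left | right]; apply bool_ofE; exists y; auto.
Qed.

(* The join-open sets W with [meets W C <-> W x] form a topology containing both generators. *)
Lemma join_top_meets_iff C x :
  irreducible_closed (join_top Ttt Tff) C ->
  (forall U, Ttt U -> (meets U C <-> U x)) -> (forall V, Tff V -> (meets V C <-> V x)) ->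
  forall W, join_top Ttt Tff W -> (meets W C <-> W x).
Proof.
  intros HC Htt Hff W HW.
  refine (proj2 (HW (fun W => join_top Ttt Tff W /\ (meets W C <-> W x)) _ _ _)).
  - destruct is_topology_join_top as [Jfull [Jinter Jjoin]]; split; [|split].
    + split; [exact Jfull|]; destruct HC as [_ [[y Cy] _]]; split; [auto | exists y; auto].
    + intros U V [HU eU] [HV eV]; split; [auto|]; split.
      * intros [y [[Uy Vy] Cy]]; split; [apply eU | apply eV]; exists y; auto.
      * intros [Ux Vx]; apply (irreducible_meets_inter _ _ U V HC HU HV); [apply eU | apply eV]; auto.
    + intros I F HF; split; [apply Jjoin; intro i; apply HF|]; split.
      * intros [y [[i Fy] Cy]]; exists i; apply (proj2 (HF i)); exists y; auto.
      * intros [i Fx]; destruct (proj2 (proj2 (HF i)) Fx) as [y [Fy Cy]].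
        exists y; split; [exists i|]; auto.
  - intros U HU; split; [apply join_top_tt|apply Htt]; exact HU.
  - intros V HV; split; [apply join_top_ff|apply Hff]; exact HV.
Qed.

Lemma sober_join_top_of_d_sober : d_sober Ttt Tff -> sober (join_top Ttt Tff).
Proof.
  intros HD C HC.
  destruct (HD _ _ (d_point_meets C HC)) as [x [[Hx_tt Hx_ff] Huniq]].
  assert (Hmeets : forall W, join_top Ttt Tff W -> (meets W C <-> W x)).
  { apply join_top_meets_iff; [exact HC | |]; intros U HU;
      rewrite <- (bool_ofE (meets U C)); [apply Hx_tt | apply Hx_ff]; exact HU. }
  exists x; split.
  - exact (point_closure_of_meets_iff _ C x (proj1 HC) Hmeets).
  - intros y Hy; apply Huniq; split; intros U HU; rewrite bool_ofE;
      apply (meets_iff_of_point_closure _ C y Hy); [apply join_top_tt | apply join_top_ff]; exact HU.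
Qed.

End JoinSober.

Theorem mainTheorem8 (X : Type) (Ttt Tff : (X -> Prop) -> Prop) :
  is_topology Ttt -> is_topology Tff ->
  B_sober Ttt Tff ->
  d_sober Ttt Tff /\ sober (join_top Ttt Tff).
Proof.
  intros Htt Hff HB.
  assert (HD : d_sober Ttt Tff) by exact (d_sober_of_B_sober X Ttt Tff Htt Hff HB).
  split; [exact HD | exact (sober_join_top_of_d_sober X Ttt Tff HD)].
Qed.
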